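(* Let $n\geq1$, $\eta=(z,d_0,d_1,\ldots,d_r)\in\Omega$ and $1\leq l<j\leq n$. (a) If $v_{l,\eta}=(p_l,0)$ and $v_{j,\eta}=(p_j,0)$, then $\pi_1(v_{j,\eta}+(n-j)(1,1))\leq\pi_1(v_{l,\eta}+(n-l)(1,1))$, with equality if and only if there exists $1\leq t\leq r$ with $\sum_{i=0}^{t-1}d_i<l<j\leq\sum_{i=0}^td_i$. (b) If $v_{l,\eta}=(0,p_l)$ and $v_{j,\eta}=(0,p_j)$, then $\pi_2(v_{j,\eta}+(n-j)(1,1))\leq\pi_2(v_{l,\eta}+(n-l)(1,1))$, with equality if and only if there exists $1\leq t\leq r$ with $\sum_{i=0}^{t-1}d_i<l<j\leq\sum_{i=0}^td_i$.
   Context: $\pi_i$ is the $i$-th coordinate. $\Omega$ is the set of $\eta=(z,d_0,\ldots,d_r)$ with $z\in\{0,1\}$, $d_0=0$, $d_i\geq1$ ($1\leq i\leq r$), $\sum_{i=0}^rd_i=n$. For $j\in\{1,\ldots,n\}$, $t\in\{1,\ldots,r\}$ is unique with $\sum_{i=0}^{t-1}d_i<j\leq\sum_{i=0}^td_i$, $c=j-\sum_{i=0}^{t-1}d_i$; $v_{j,\eta}=(\sum_{i\text{ odd},i<t}d_i+c,0)$ if $z=1,t$ odd; $(0,\sum_{i\text{ even},i<t}d_i+c)$ if $z=1,t$ even; $(0,\sum_{i\text{ odd},i<t}d_i+c)$ if $z=0,t$ odd; $(\sum_{i\text{ even},i<t}d_i+c,0)$ if $z=0,t$ even. *)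

From mathcomp Require Import all_boot.
Set Implicit Arguments. Unset Strict Implicit. Unset Printing Implicit Defensive.

(* eta = (z, d_0, ..., d_r) is represented by z : nat and the sequence
   d = [:: d_0; d_1; ...; d_r] (so r = (size d).-1 and d_i = nth 0 d i). *)

Definition dd (d : seq nat) (i : nat) : nat := nth 0 d i.

Definition rr (d : seq nat) : nat := (size d).-1.

Definition psum (d : seq nat) (t : nat) : nat := \sum_(0 <= i < t.+1) dd d i.

Definition inOmega (n : nat) (z : nat) (d : seq nat) : Prop :=
  [/\ z = 0 \/ z = 1,
      0 < size d,
      dd d 0 = 0,
      (forall i, 1 <= i <= rr d -> 1 <= dd d i)
    & \sum_(0 <= i < (rr d).+1) dd d i = n].

(* The block index t of j: the least t with j <= \sum_{i=0}^t d_i.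
   For eta in Omega and 1 <= j <= n this is the unique t in {1,...,r}
   with \sum_{i=0}^{t-1} d_i < j <= \sum_{i=0}^t d_i. *)
Definition blk (d : seq nat) (j : nat) : nat :=
  find (fun t => j <= psum d t) (iota 0 (size d)).

Definition vv (z : nat) (d : seq nat) (j : nat) : nat * nat :=
  let t := blk d j in
  let c := j - \sum_(0 <= i < t) dd d i in
  let so := \sum_(0 <= i < t | odd i) dd d i in
  let se := \sum_(0 <= i < t | ~~ odd i) dd d i in
  if z == 1 then
    (if odd t then (so + c, 0) else (0, se + c))
  else
    (if odd t then (0, so + c) else (se + c, 0)).

Definition vadd (u w : nat * nat) : nat * nat := (u.1 + w.1, u.2 + w.2).
Definition pi1 (u : nat * nat) : nat := u.1.
Definition pi2 (u : nat * nat) : nat := u.2.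

From mathcomp Require Import all_boot zify.

(* Write t_x for the block of x and B(t) for the sum of the d_i, i < t, whose
   parity differs from that of t.  The nonzero coordinate of v_x is
   x - B(t_x), so the shifted coordinate is n - B(t_x).  The vectors v_l and
   v_j lie on the same axis exactly when t_l and t_j have the same parity;
   then B(t_l) <= B(t_j), strictly when t_l < t_j because d_(t_l + 1) >= 1
   is counted in B(t_j) only. *)

Set Implicit Arguments.
Unset Strict Implicit.
Unset Printing Implicit Defensive.

Section Blocks.

Variable d : seq nat.

Local Notation pre t := (\sum_(0 <= i < t) dd d i).

Lemma leq_pre a b : a <= b -> pre a <= pre b.
Proof. by move=> le_ab; rewrite [leqRHS](@big_cat_nat _ _ _ a) //= leq_addr. Qed.

Lemma pre_blk_lt x : 0 < blk d x -> pre (blk d x) < x.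
Proof.
case E: (blk d x) => [|k] // _.
have k_lt : k < blk d x by rewrite E.
have := before_find 0 k_lt; rewrite nth_iota; last first.
  by rewrite -(size_iota 0 (size d)); apply: leq_trans k_lt (find_size _ _).
by rewrite /psum add0n => /negbT; rewrite -ltnNge.
Qed.

Lemma pre_blk_leq x : pre (blk d x) <= x.
Proof.
have [-> | /pre_blk_lt/ltnW //] := posnP (blk d x).
by rewrite big_geq.
Qed.

Hypothesis d_gt0 : 0 < size d.

Section Bounded.

Variable x : nat.
Hypothesis x_le : x <= pre (size d).

Lemma has_blk : has (fun t => x <= psum d t) (iota 0 (size d)).
Proof.
apply/hasP; exists (size d).-1; first by rewrite mem_iota; lia.
by rewrite /psum prednK.
Qed.

Lemma blk_lt_size : blk d x < size d.
Proof. by rewrite /blk -{2}(size_iota 0 (size d)) -has_find has_blk. Qed.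

Lemma leq_pre_blkS : x <= pre (blk d x).+1.
Proof. by have := nth_find 0 has_blk; rewrite nth_iota ?blk_lt_size. Qed.

End Bounded.

Lemma blkE t x : t < size d -> pre t < x <= pre t.+1 -> blk d x = t.
Proof.
move=> t_lt /andP[lt_x le_x].
have x_le : x <= pre (size d) by apply: leq_trans le_x (leq_pre t_lt).
have [lt_blk | lt_t | //] := ltngtP (blk d x) t.
  have := leq_pre lt_blk; have := leq_pre_blkS x_le; lia.
have := leq_pre lt_t; have := pre_blk_lt (leq_ltn_trans (leq0n t) lt_t); lia.
Qed.

Hypothesis dd0 : dd d 0 = 0.

Lemma blk_gt0 x : x <= pre (size d) -> 0 < x -> 0 < blk d x.
Proof.
move=> x_le x_gt0; have := leq_pre_blkS x_le; case: (blk d x) => //.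
by rewrite big_nat1 dd0; lia.
Qed.

Lemma leq_blk x y : 0 < x <= y -> y <= pre (size d) -> blk d x <= blk d y.
Proof.
move=> /andP[x_gt0 le_xy] y_le; rewrite leqNgt; apply/negP => lt_yx.
have := pre_blk_lt (blk_gt0 (leq_trans le_xy y_le) x_gt0).
have := leq_pre lt_yx; have := leq_pre_blkS y_le; lia.
Qed.

Lemma same_blockP l j : 0 < l <= j -> j <= pre (size d) ->
  (exists t, [/\ 1 <= t <= rr d, pre t < l & j <= pre t.+1]) <-> blk d l = blk d j.
Proof.
move=> /andP[l_gt0 le_lj] j_le; have l_le := leq_trans le_lj j_le.
have size_rr : (rr d).+1 = size d by rewrite /rr prednK.
split=> [[t [/andP[_ t_le] lt_l le_j]] | same].
  have t_lt : t < size d by rewrite -size_rr.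
  by rewrite (@blkE t l) ?(@blkE t j) //; lia.
exists (blk d l); split; last by rewrite same leq_pre_blkS.
- by rewrite blk_gt0 //= -ltnS size_rr blk_lt_size.
- by rewrite pre_blk_lt ?blk_gt0.
Qed.

End Blocks.

Definition opp_parity_sum (d : seq nat) (t : nat) : nat :=
  \sum_(0 <= i < t | odd i != odd t) dd d i.

Lemma opp_parity_sum_leq_pre d t :
  opp_parity_sum d t <= \sum_(0 <= i < t) dd d i.
Proof. by rewrite [leqRHS](bigID (fun i => odd i != odd t)) leq_addr. Qed.

Lemma leq_opp_parity_sum d tl tj : tl <= tj -> odd tl = odd tj ->
  opp_parity_sum d tl <= opp_parity_sum d tj.
Proof.
by move=> le_t same; rewrite /opp_parity_sum -same [leqRHS](@big_cat_nat _ _ _ tl) //= leq_addr.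
Qed.

Lemma ltn_opp_parity_sum d tl tj : tl < tj -> odd tl = odd tj -> 0 < dd d tl.+1 ->
  opp_parity_sum d tl < opp_parity_sum d tj.
Proof.
move=> lt_t same dd_gt0; have lt_t2 : tl.+1 < tj.
  rewrite ltn_neqAle lt_t andbT; apply/eqP => eq_t.
  by move: same; rewrite -eq_t /=; case: odd.
rewrite /opp_parity_sum -same [ltnRHS](@big_cat_nat _ _ _ tl) ?(ltnW lt_t) //=.
rewrite -addn1 leq_add2l.
by rewrite big_ltn_cond // eqxx big_ltn_cond // oddS; case: odd; apply: ltn_addr.
Qed.

Lemma vvE z d x : vv z d x =
  let p := x - opp_parity_sum d (blk d x) in
  if (z == 1) == odd (blk d x) then (p, 0) else (0, p).
Proof.
rewrite /vv /=; set t := blk d x.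
have le_x : \sum_(0 <= i < t) dd d i <= x := pre_blk_leq d x.
have split_parity : \sum_(0 <= i < t) dd d i =
    \sum_(0 <= i < t | odd i) dd d i + \sum_(0 <= i < t | ~~ odd i) dd d i.
  by rewrite [LHS](bigID odd).
have -> : opp_parity_sum d t =
    if odd t then \sum_(0 <= i < t | ~~ odd i) dd d i else \sum_(0 <= i < t | odd i) dd d i.
  by rewrite /opp_parity_sum; case: (odd t); apply: eq_bigl => i; case: (odd i).
by case: (odd t); case: (z == 1); congr pair; lia.
Qed.

Section Omega.

Variables (n z : nat) (d : seq nat).
Hypothesis Omega : inOmega n z d.

Local Notation pre t := (\sum_(0 <= i < t) dd d i).

Lemma pre_size : pre (size d) = n.
Proof. by case: Omega => _ d_gt0 _ _ <-; rewrite /rr prednK. Qed.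

Lemma opp_parity_sum_blk_lt x : 0 < x <= n -> opp_parity_sum d (blk d x) < x.
Proof.
case: Omega => _ d_gt0 dd0 _ _ /andP[x_gt0 x_le]; rewrite -pre_size in x_le.
exact: leq_ltn_trans (opp_parity_sum_leq_pre _ _) (pre_blk_lt (blk_gt0 d_gt0 dd0 x_le x_gt0)).
Qed.

Lemma vv_on_axis (b : bool) x p : 0 < x <= n ->
  vv z d x = (if b then (p, 0) else (0, p)) ->
  odd (blk d x) = (if b then z == 1 else z != 1) /\ p = x - opp_parity_sum d (blk d x).
Proof.
move=> /opp_parity_sum_blk_lt; rewrite vvE /= -subn_gt0.
by case: b; case: (z == 1); case: odd => //= coord_gt0 [] *; split; lia.
Qed.

Lemma shifted_coord_cmp l j : 0 < l < j -> j <= n -> odd (blk d l) = odd (blk d j) ->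
  j - opp_parity_sum d (blk d j) + (n - j) <= l - opp_parity_sum d (blk d l) + (n - l) /\
  (j - opp_parity_sum d (blk d j) + (n - j) = l - opp_parity_sum d (blk d l) + (n - l) <->
   exists t, [/\ 1 <= t <= rr d, pre t < l & j <= pre t.+1]).
Proof.
case: Omega => _ d_gt0 dd0 d_pos _ /andP[l_gt0 lt_lj] j_le same.
have Bl : opp_parity_sum d (blk d l) < l by apply: opp_parity_sum_blk_lt; lia.
have Bj : opp_parity_sum d (blk d j) < j by apply: opp_parity_sum_blk_lt; lia.
have j_le_pre : j <= pre (size d) by rewrite pre_size.
rewrite same_blockP ?l_gt0 ?(ltnW lt_lj) //.
have le_t : blk d l <= blk d j by rewrite leq_blk ?l_gt0 ?(ltnW lt_lj).
have le_opp := leq_opp_parity_sum d le_t same.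
move: le_t Bl; rewrite leq_eqVlt => /predU1P[-> Bl | lt_t Bl].
  by split; [lia | split=> //; lia].
have lt_opp : opp_parity_sum d (blk d l) < opp_parity_sum d (blk d j).
  apply: (ltn_opp_parity_sum lt_t same (d_pos _ _)).
  by have := blk_lt_size d_gt0 j_le_pre; rewrite /rr; lia.
by split; [lia | split=> [? | eq_t]; [lia | rewrite eq_t ltnn in lt_t]].
Qed.

End Omega.

Theorem lemma2p8 (n : nat) (z : nat) (d : seq nat) (l j : nat) :
  1 <= n -> inOmega n z d -> 1 <= l -> l < j -> j <= n ->
  (forall pl pj : nat, vv z d l = (pl, 0) -> vv z d j = (pj, 0) ->
     pi1 (vadd (vv z d j) (n - j, n - j)) <= pi1 (vadd (vv z d l) (n - l, n - l))
     /\ (pi1 (vadd (vv z d j) (n - j, n - j)) = pi1 (vadd (vv z d l) (n - l, n - l))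
         <-> exists t, [/\ 1 <= t <= rr d,
                          \sum_(0 <= i < t) dd d i < l & j <= \sum_(0 <= i < t.+1) dd d i]))
  /\
  (forall pl pj : nat, vv z d l = (0, pl) -> vv z d j = (0, pj) ->
     pi2 (vadd (vv z d j) (n - j, n - j)) <= pi2 (vadd (vv z d l) (n - l, n - l))
     /\ (pi2 (vadd (vv z d j) (n - j, n - j)) = pi2 (vadd (vv z d l) (n - l, n - l))
         <-> exists t, [/\ 1 <= t <= rr d,
                          \sum_(0 <= i < t) dd d i < l & j <= \sum_(0 <= i < t.+1) dd d i])).
Proof.
move=> _ Omega l_gt0 lt_lj j_le.
have l_range : 0 < l <= n by rewrite l_gt0 ltnW ?(leq_trans lt_lj).
have j_range : 0 < j <= n by rewrite j_le (leq_ltn_trans (leq0n _) lt_lj).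
have lj_range : 0 < l < j by rewrite l_gt0.
split=> pl pj vl vj.
- have [odd_l pl_eq] := vv_on_axis Omega (b := true) l_range vl.
  have [odd_j pj_eq] := vv_on_axis Omega (b := true) j_range vj.
  rewrite vl vj /= pl_eq pj_eq; apply: (shifted_coord_cmp Omega) => //.
  by rewrite odd_l odd_j.
- have [odd_l pl_eq] := vv_on_axis Omega (b := false) l_range vl.
  have [odd_j pj_eq] := vv_on_axis Omega (b := false) j_range vj.
  rewrite vl vj /= pl_eq pj_eq; apply: (shifted_coord_cmp Omega) => //.
  by rewrite odd_l odd_j.
Qed.
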